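(* For every $C>1$ and every natural number $L$ there is $n_0\in\mathbb N$ such that the following holds. Let $G=(V_1,V_2,E)$ be a $C$-bipartite-Ramsey graph with $|V_1|,|V_2|\ge n_0$, and put $\varepsilon_i:=(64C)^{-i}$ for $i\in[L]$. Then there are vertices $u_1,\ldots,u_L\in V_1$ such that for all $i\in[L]$, $$\Big|N(u_i)\setminus\bigcup_{j<i}N(u_j)\Big|\ge\varepsilon_i|V_2|\quad\text{and}\quad\Big|V_2\setminus\bigcup_{j\le i}N(u_j)\Big|\ge\varepsilon_i|V_2|.$$
   Context: A bipartite graph $G=(V_1,V_2,E)$ has vertex set $V_1\sqcup V_2$ and edge set $E\subset V_1\times V_2$; $N(u)$ is the neighbourhood of $u$. Given $C>0$, $G$ is called $C$-bipartite-Ramsey if for all integers $t_1\ge C\log_2|V_1|$ and $t_2\ge C\log_2|V_2|$ there are no $T_1\subset V_1$, $T_2\subset V_2$ with $|T_1|=t_1$, $|T_2|=t_2$ such that all pairs in $T_1\times T_2$ are edges, or all are non-edges. $[L]=\{1,\ldots,L\}$. *)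

From mathcomp Require Import all_boot.
From Stdlib Require Import Reals.
Set Implicit Arguments. Unset Strict Implicit. Unset Printing Implicit Defensive.

Definition log2 (x : R) : R := (ln x / ln 2)%R.

Definition nbhd (V1 V2 : finType) (E : V1 -> V2 -> bool) (u : V1) : {set V2} :=
  [set v | E u v].

Definition bip_ramsey (C : R) (V1 V2 : finType) (E : V1 -> V2 -> bool) : Prop :=
  forall (t1 t2 : nat),
    (C * log2 (INR #|V1|) <= INR t1)%R ->
    (C * log2 (INR #|V2|) <= INR t2)%R ->
    ~ (exists (T1 : {set V1}) (T2 : {set V2}),
          #|T1| = t1 /\ #|T2| = t2 /\
          ((forall x y, x \in T1 -> y \in T2 -> E x y) \/
           (forall x y, x \in T1 -> y \in T2 -> ~~ E x y))).

(* Choose u_1, ..., u_L greedily.  If the set U of vertices of V_2 missed by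
   N(u_1), ..., N(u_{i-1}) has at least eps_{i-1}|V_2| elements, some u splits U
   into N(u) ∩ U and U \ N(u), both of size at least |U|/(64C) >= eps_i|V_2|.
   Otherwise every vertex of V_1 has fewer than |U|/(64C) neighbours or fewer
   than |U|/(64C) non-neighbours in U, and half of V_1 is of one kind.  Between
   that half and U (or a large part of U of low degree, by Markov) one picks
   vertices of one side one at a time, each adjacent to few of the vertices of
   the other side kept so far; after m s steps a fraction 2^-s of that side
   survives (Bernoulli's inequality), which yields an empty (resp. complete)
   pair of sizes about C log_2|V_1| and C log_2|V_2|, contradicting the Ramsey
   property.  The threshold n_0 makes |U| >= |V_2|/(64C)^L large enough for
   this. *)

From Stdlib Require Import Reals Lra ZArith Classical.
From mathcomp Require Import all_boot zify.
Set Implicit Arguments. Unset Strict Implicit. Unset Printing Implicit Defensive.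

Lemma card_sep_sum (T : finType) (A : {set T}) (P : pred T) :
  #|[set x in A | P x]| = \sum_(x in A) P x.
Proof.
rewrite -sum1_card big_mkcond /= [RHS]big_mkcond /=.
by apply: eq_bigr => x _; rewrite !inE; case: (x \in A); case: (P x).
Qed.

Lemma exists_subset_card (T : finType) (A : {set T}) k :
  k <= #|A| -> exists2 B : {set T}, B \subset A & #|B| = k.
Proof.
case/card_geqP => s [uniq_s size_s sA]; exists [set x in s].
  by apply/subsetP => x; rewrite inE => /sA.
by rewrite cardsE (card_uniqP uniq_s).
Qed.

Lemma bernoulli_expn q n : n <= q -> q ^ n * (q - n) <= q * (q - 1) ^ n.
Proof.
elim: n => [|n IH] le_n_q; first by rewrite expn0 mul1n muln1 subn0.
have key : q * (q - n.+1) <= (q - 1) * (q - n) by nia.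
have := IH (ltnW le_n_q); rewrite !expnS.
move: (q ^ n) ((q - 1) ^ n) => a b hab.
have := leq_mul (leqnn a) key.
nia.
Qed.

Lemma expn_half_bound m s : 0 < m -> (2 * m) ^ (m * s) <= 2 ^ s * (2 * m - 1) ^ (m * s).
Proof.
move=> m_gt0; rewrite !expnM -expnMn.
have base : (2 * m) ^ m <= 2 * (2 * m - 1) ^ m.
  have := @bernoulli_expn (2 * m) m (leq_pmull m (isT : 0 < 2)).
  have -> : 2 * m - m = m by lia.
  by rewrite mulnAC leq_pmul2r.
by case: s => [|s]; rewrite ?expn0 ?leq_exp2r.
Qed.

Lemma expn16_growth K s : K <= s -> 2 ^ s * (K * s.+1) <= 16 ^ s.
Proof.
move=> le_K_s; have -> : 16 ^ s = 2 ^ s * (4 ^ s * 2 ^ s) by rewrite -!expnMn.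
rewrite leq_mul2l; apply/orP; right.
by apply: leq_mul; [apply: leq_trans le_K_s (ltnW (ltn_expl s _)) | apply: ltn_expl].
Qed.

Section Degrees.

Variables (T W : finType) (F : T -> W -> bool).

Lemma double_counting (X : {set T}) (Y : {set W}) :
  \sum_(y in Y) #|[set x in X | F x y]| = \sum_(x in X) #|[set y in Y | F x y]|.
Proof.
under eq_bigr do rewrite card_sep_sum.
by rewrite exchange_big /=; apply: eq_bigr => x _; rewrite card_sep_sum.
Qed.

Lemma exists_low_codegree q (X : {set T}) (Y Z : {set W}) :
  (forall x, x \in X -> 2 * q * #|[set y in Y | F x y]| <= #|Y|) ->
  Z \subset Y -> #|Y| <= 2 * #|Z| -> 0 < #|Z| ->
  exists2 y, y \in Z & q * #|[set x in X | F x y]| <= #|X|.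
Proof.
move=> hdeg sZY hYZ hZ; apply/exists_inP; apply: contraT => /exists_inPn hZ'.
have hlow : \sum_(y in Z) #|X|.+1 <= \sum_(y in Z) q * #|[set x in X | F x y]|.
  by apply: leq_sum => y /hZ'; rewrite -ltnNge.
have hswap : \sum_(y in Z) #|[set x in X | F x y]| <= \sum_(x in X) #|[set y in Y | F x y]|.
  rewrite double_counting; apply: leq_sum => x _; apply: subset_leq_card.
  by apply/subsetP => y; rewrite !inE => /andP [/(subsetP sZY) -> ->].
have hhigh : \sum_(x in X) 2 * q * #|[set y in Y | F x y]| <= \sum_(x in X) #|Y|.
  exact: leq_sum.
rewrite sum_nat_const -big_distrr /= in hlow.
rewrite sum_nat_const -big_distrr /= in hhigh.
move: hlow hswap hhigh; set s := \sum_(y in Z) _; set s' := \sum_(x in X) _ => hlow hswap hhigh.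
have : 2 * q * s <= 2 * q * s' by rewrite leq_mul2l hswap orbT.
nia.
Qed.

Lemma greedy_empty_pair q t (X : {set T}) (Y : {set W}) :
  0 < q -> (forall x, x \in X -> 2 * q * #|[set y in Y | F x y]| <= #|Y|) ->
  2 * t <= #|Y| ->
  exists2 S : {set W}, S \subset Y & #|S| = t /\
    exists2 X' : {set T}, X' \subset X &
      (forall x y, x \in X' -> y \in S -> ~~ F x y) /\
      (q - 1) ^ t * #|X| <= q ^ t * #|X'|.
Proof.
move=> q_gt0 hdeg; elim: t => [|t IH] ht.
  exists set0; rewrite ?sub0set ?cards0 //; split=> //.
  by exists X => //; split=> // x y _; rewrite inE.
have [S sSY [cS [X' sX'X [hX' hX'X]]]] := IH ltac:(lia).
have [y yYS hy] : exists2 y, y \in Y :\: S & q * #|[set x in X' | F x y]| <= #|X'|.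
  apply: (exists_low_codegree (Y := Y)); rewrite ?subsetDl ?cardsDS ?cS //; try lia.
  by move=> x /(subsetP sX'X); apply: hdeg.
move: yYS; rewrite inE => /andP [yS yY].
set D := [set x in X' | F x y] in hy *.
have sDX' : D \subset X' by apply/subsetP => x; rewrite inE => /andP [].
exists (y |: S); first by rewrite subUset sub1set yY.
split; first by rewrite cardsU1 yS cS.
exists (X' :\: D); first exact: subset_trans (subsetDl _ _) sX'X.
split.
  move=> x z; rewrite !inE => /andP [xD xX'] /orP [/eqP -> | zS]; last exact: hX'.
  by move: xD; rewrite xX'.
have hshrink : (q - 1) * #|X'| <= q * #|X' :\: D|.
  rewrite cardsDS // mulnBr mulnBl mul1n; have := subset_leq_card sDX'; lia.
rewrite !expnS -mulnA mulnCA (mulnC q) -mulnA.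
apply: leq_trans (leq_mul (leqnn _) hshrink).
by rewrite mulnCA [q ^ t * _]mulnCA leq_mul2l hX'X orbT.
Qed.

Lemma empty_pair_of_sparse m s t (X : {set T}) (Y : {set W}) : 0 < m ->
  (forall x, x \in X -> 4 * m * #|[set y in Y | F x y]| <= #|Y|) ->
  2 * (m * s) <= #|Y| -> 2 ^ s * t <= #|X| ->
  exists T1 : {set T}, exists T2 : {set W},
    [/\ #|T1| = t, #|T2| = m * s & forall x y, x \in T1 -> y \in T2 -> ~~ F x y].
Proof.
move=> m_gt0 hdeg hY hX.
have q_gt0 : 0 < 2 * m by rewrite muln_gt0.
have hdeg' : forall x, x \in X -> 2 * (2 * m) * #|[set y in Y | F x y]| <= #|Y|.
  by move=> x /hdeg; rewrite mulnA.
have [S sSY [cS [X' sX'X [hX' hX'X]]]] := greedy_empty_pair q_gt0 hdeg' hY.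
have [T1 sT1 cT1] : exists2 T1 : {set T}, T1 \subset X' & #|T1| = t.
  apply: exists_subset_card.
  have := expn_half_bound s m_gt0.
  have : 0 < 2 ^ s * (2 * m - 1) ^ (m * s) by rewrite muln_gt0 !expn_gt0; lia.
  move: hX hX'X; move: (2 ^ s) ((2 * m - 1) ^ (m * s)) ((2 * m) ^ (m * s)) => a b c.
  move=> hX hX'X ab_gt0 hc; rewrite -(leq_pmul2l ab_gt0).
  have := leq_mul (leqnn b) hX; have := leq_mul hc (leqnn #|X'|); nia.
exists T1, S; split=> // x y /(subsetP sT1); exact: hX'.
Qed.

Lemma half_low_codegree m (X : {set T}) (Y : {set W}) :
  (forall x, x \in X -> 8 * m * #|[set y in Y | F x y]| <= #|Y|) ->
  #|Y| <= 2 * #|[set y in Y | 4 * m * #|[set x in X | F x y]| <= #|X|]|.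
Proof.
move=> hdeg; set Good := [set y in Y | _].
have cY : #|Y| = #|Y :&: Good| + #|Y :\: Good| by rewrite cardsID.
have hGood : #|Y :&: Good| <= #|Good| by apply/subset_leq_card/subsetIr.
have hbad : \sum_(y in Y :\: Good) #|X|.+1 <= \sum_(y in Y) 4 * m * #|[set x in X | F x y]|.
  rewrite [X in _ <= X](big_setID Good) /=; apply: leq_trans (leq_addl _ _).
  by apply: leq_sum => y; rewrite !inE ltnNge; case: (y \in Y); rewrite /= ?andbT.
have hsum : \sum_(x in X) 8 * m * #|[set y in Y | F x y]| <= \sum_(x in X) #|Y|.
  exact: leq_sum.
rewrite sum_nat_const -big_distrr /= double_counting in hbad.
rewrite sum_nat_const -big_distrr /= in hsum.
move: hbad hsum; set s := \sum_(x in X) _ => hbad hsum.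
nia.
Qed.

End Degrees.

Lemma empty_pair_of_low_degree (V1 V2 : finType) (F : V1 -> V2 -> bool) m s1 s2
    (A : {set V1}) (U : {set V2}) : 0 < m ->
  (forall a, a \in A -> 8 * m * #|[set v in U | F a v]| <= #|U|) ->
  (2 * (m * s2) <= #|U| /\ 2 ^ s2 * (m * s1) <= #|A|) \/
  (2 * (m * s1) <= #|A| /\ 2 ^ s1 * (2 * (m * s2)) <= #|U|) ->
  exists T1 : {set V1}, exists T2 : {set V2},
    [/\ #|T1| = m * s1, #|T2| = m * s2 & forall x y, x \in T1 -> y \in T2 -> ~~ F x y].
Proof.
move=> m_gt0 hdeg [[hU hA] | [hA hU]].
  apply: empty_pair_of_sparse m_gt0 _ hU hA.
  by move=> a /hdeg; lia.
have hGood := half_low_codegree hdeg.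
set Good := [set v in U | _] in hGood.
have hdeg' : forall v, v \in Good -> 4 * m * #|[set a in A | F a v]| <= #|A|.
  by move=> v; rewrite inE => /andP [].
have hsize : 2 ^ s1 * (m * s2) <= #|Good| by rewrite mulnCA in hU; lia.
have [T2 [T1 [cT2 cT1 hT]]] :=
  empty_pair_of_sparse (F := fun v a => F a v) m_gt0 hdeg' hA hsize.
by exists T1, T2; split=> // x y xT1 yT2; apply: hT.
Qed.

Lemma pair_size_conditions m M s1 s2 a u n1 n2 :
  4 * m * M <= s1 -> 4 * m * M <= s2 ->
  16 ^ s1 <= n1 -> n1 <= 2 * a -> 16 ^ s2 <= n2 -> n2 <= M * u ->
  (2 * (m * s2.+1) <= u /\ 2 ^ s2.+1 * (m * s1.+1) <= a) \/
  (2 * (m * s1.+1) <= a /\ 2 ^ s1.+1 * (2 * (m * s2.+1)) <= u).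
Proof.
move=> hs1 hs2 hn1 ha hn2 hu.
have g1 := leq_trans (expn16_growth hs1) (leq_trans hn1 ha).
have g2 := leq_trans (expn16_growth hs2) (leq_trans hn2 hu).
have M_gt0 : 0 < M.
  by case: M {hs1 hs2 g1 g2} hu => // /(leq_trans (leq_trans (expn_gt0 16 s2) hn2)).
have dropM s : 4 * m * s <= 4 * m * M * s by rewrite [leqRHS]mulnAC; apply: leq_pmulr.
rewrite !expnS; case: (leqP s2 s1) => hs; [left | right]; split.
- rewrite -(leq_pmul2l M_gt0); apply: leq_trans g2.
  apply: leq_trans (leq_pmull _ (expn_gt0 2 s2)); nia.
- have := leq_mul (leq_pexp2l (isT : 0 < 2) hs) (dropM s1.+1); nia.
- have := leq_trans (leq_pmull _ (expn_gt0 2 s1)) g1; have := dropM s1.+1; nia.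
- rewrite -(leq_pmul2l M_gt0); apply: leq_trans g2.
  apply: leq_trans (leq_mul (leq_pexp2l (isT : 0 < 2) (ltnW hs)) (leqnn _)); nia.
Qed.

Definition homogeneous (V1 V2 : finType) (E : V1 -> V2 -> bool)
    (T1 : {set V1}) (T2 : {set V2}) : Prop :=
  (forall x y, x \in T1 -> y \in T2 -> E x y) \/
  (forall x y, x \in T1 -> y \in T2 -> ~~ E x y).

Lemma homogeneous_pair_of_unbalanced (V1 V2 : finType) (E : V1 -> V2 -> bool)
    (U : {set V2}) m M s1 s2 :
  0 < m -> 4 * m * M <= s1 -> 4 * m * M <= s2 ->
  16 ^ s1 <= #|V1| -> 16 ^ s2 <= #|V2| -> #|V2| <= M * #|U| ->
  (forall u, 8 * m * #|[set v in U | E u v]| <= #|U| \/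
             8 * m * #|[set v in U | ~~ E u v]| <= #|U|) ->
  exists T1 : {set V1}, exists T2 : {set V2},
    [/\ #|T1| = m * s1.+1, #|T2| = m * s2.+1 & homogeneous E T1 T2].
Proof.
move=> m_gt0 hs1 hs2 hV1 hV2 hU unbalanced.
set A := [set u | 8 * m * #|[set v in U | E u v]| <= #|U|].
have sizes (B : {set V1}) (hB : #|V1| <= 2 * #|B|) :=
  pair_size_conditions hs1 hs2 hV1 hB hV2 hU.
have [hA | hA] : #|V1| <= 2 * #|A| \/ #|V1| <= 2 * #|~: A|.
  by have := cardsC A; lia.
- have sparseA : forall a, a \in A -> 8 * m * #|[set v in U | E a v]| <= #|U|.
    by move=> a; rewrite inE.
  have [T1 [T2 [cT1 cT2 hT]]] := empty_pair_of_low_degree m_gt0 sparseA (sizes _ hA).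
  by exists T1, T2; split=> //; right.
- have cosparseA : forall a, a \in ~: A -> 8 * m * #|[set v in U | ~~ E a v]| <= #|U|.
    by move=> a; rewrite !inE; case: (unbalanced a) => ->.
  have [T1 [T2 [cT1 cT2 hT]]] := empty_pair_of_low_degree m_gt0 cosparseA (sizes _ hA).
  by exists T1, T2; split=> //; left=> x y xT1 yT2; apply/negPn/hT.
Qed.

Local Open Scope R_scope.

Lemma INR_expn a k : INR (a ^ k) = INR a ^ k.
Proof. by elim: k => [|k IH]; rewrite ?expn0 ?expnS ?mult_INR ?IH. Qed.

Lemma log2_INR_bounds (n s : nat) :
  (0 < n)%N -> (n < 2 ^ s)%N -> 0 <= log2 (INR n) <= INR s.
Proof.
move=> n_gt0 n_lt.
have ln2_gt0 : 0 < ln 2 by have := ln_lt_2; lra.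
have n_ge1 : 1 <= INR n by apply: (le_INR 1); apply/leP.
have ln_n_ge0 : 0 <= ln (INR n).
  case: (Rle_lt_or_eq_dec _ _ n_ge1) => [n_gt1 | <-]; last by rewrite ln_1; lra.
  by rewrite -ln_1; left; apply: ln_increasing; lra.
have ln_n_le : ln (INR n) <= INR s * ln 2.
  have : INR n < 2 ^ s by rewrite -[2]/(INR 2) -INR_expn; apply: lt_INR; apply/ltP.
  by rewrite -ln_pow; [left; apply: ln_increasing; lra | lra].
have log2E : log2 (INR n) * ln 2 = ln (INR n) by rewrite /log2; field; lra.
split; nra.
Qed.

Lemma log2_size_bound C (m n s : nat) : 0 <= C -> 4 * C <= INR m ->
  (0 < n)%N -> (n < 16 ^ s)%N -> C * log2 (INR n) <= INR (m * s).
Proof.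
move=> C_ge0 hm n_gt0 n_lt.
have n_lt' : (n < 2 ^ (4 * s))%N by rewrite expnM.
have [l_ge0 l_le] := log2_INR_bounds n_gt0 n_lt'.
rewrite !mult_INR in l_le *; rewrite [INR 4]/= in l_le.
have := pos_INR s; nra.
Qed.

Lemma exists_nat_between C : 1 < C -> exists m : nat, 4 * C <= INR m <= 8 * C.
Proof.
move=> C_gt1; have [lo hi] := base_Int_part (8 * C).
have z_ge0 : (0 <= Int_part (8 * C))%Z by apply: le_IZR; lra.
exists (Z.to_nat (Int_part (8 * C))).
rewrite INR_IZR_INZ Z2Nat.id //; lra.
Qed.

(* [4 C <= m] makes the homogeneous sets of sizes [m (s_i + 1)] reach
   [C log_2 |V_i|]; [m <= 8 C] turns "fewer than [e] neighbours in [U]" into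
   degree at most [|U| / (8 m)]. *)
Lemma ramsey_splitting_vertex C (m M : nat) (V1 V2 : finType) (E : V1 -> V2 -> bool)
    (U : {set V2}) e :
  bip_ramsey C E -> 0 < C -> 4 * C <= INR m <= 8 * C ->
  (16 ^ (4 * m * M) <= #|V1|)%N -> (16 ^ (4 * m * M) <= #|V2|)%N ->
  (#|V2| <= M * #|U|)%N -> 64 * C * e <= INR #|U| ->
  exists u, e <= INR #|nbhd E u :&: U| /\ e <= INR #|U :\: nbhd E u|.
Proof.
move=> ramsey C_gt0 [hm4 hm8] hV1 hV2 hU he.
apply: NNPP => no_split.
have m_gt0 : (0 < m)%N by apply/ltP; apply: INR_lt; rewrite [INR 0]/=; lra.
have few (X : {set V2}) : INR #|X| < e -> (8 * m * #|X| <= #|U|)%N.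
  move=> hX; apply/leP; apply: INR_le; rewrite !mult_INR [INR 8]/=.
  have := pos_INR #|X|; nra.
have unbalanced u : (8 * m * #|[set v in U | E u v]| <= #|U|)%N \/
                    (8 * m * #|[set v in U | ~~ E u v]| <= #|U|)%N.
  have -> : [set v in U | E u v] = nbhd E u :&: U.
    by apply/setP => v; rewrite !inE andbC.
  have -> : [set v in U | ~~ E u v] = U :\: nbhd E u.
    by apply/setP => v; rewrite !inE andbC.
  case: (Rlt_or_le (INR #|nbhd E u :&: U|) e) => [h1 | h1]; first by left; apply: few.
  case: (Rlt_or_le (INR #|U :\: nbhd E u|) e) => [h2 | h2]; first by right; apply: few.
  by case: no_split; exists u.
have V1_gt0 : (0 < #|V1|)%N := leq_trans (expn_gt0 16 _) hV1.
have V2_gt0 : (0 < #|V2|)%N := leq_trans (expn_gt0 16 _) hV2.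
have b16 : (1 < 16)%N by [].
have [T1 [T2 [cT1 cT2 hom]]] := homogeneous_pair_of_unbalanced m_gt0
  (trunc_log_max b16 hV1) (trunc_log_max b16 hV2)
  (trunc_logP b16 V1_gt0) (trunc_logP b16 V2_gt0) hU unbalanced.
apply: (ramsey #|T1| #|T2|); last by exists T1, T2.
- by rewrite cT1; apply: log2_size_bound => //; [lra | exact: trunc_log_ltn].
- by rewrite cT2; apply: log2_size_bound => //; [lra | exact: trunc_log_ltn].
Qed.

Section GreedySequence.

Variables (V1 V2 : finType) (E : V1 -> V2 -> bool) (c : R) (M L : nat).
Hypothesis c_ge1 : 1 <= c.
Hypothesis cL_le_M : c ^ L <= INR M.
Hypothesis split_vertex : forall (U : {set V2}) e,
  (#|V2| <= M * #|U|)%N -> c * e <= INR #|U| ->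
  exists u, e <= INR #|nbhd E u :&: U| /\ e <= INR #|U :\: nbhd E u|.

Definition covered (f : nat -> V1) (i : nat) : {set V2} := \bigcup_(j < i) nbhd E (f j).

Lemma covered_ext f g i : (forall j, (j < i)%N -> f j = g j) -> covered f i = covered g i.
Proof. by move=> fg; apply: eq_bigr => j _; rewrite fg. Qed.

Lemma coveredS f i : covered f i.+1 = covered f i :|: nbhd E (f i).
Proof. by rewrite /covered big_ord_recr. Qed.

Lemma covered_ord f (n i : nat) :
  (i <= n)%N -> covered f i = \bigcup_(j : 'I_n | (j < i)%N) nbhd E (f j).
Proof. by move=> le_i_n; rewrite /covered (big_ord_widen _ (fun k => nbhd E (f k)) le_i_n). Qed.

Lemma split_uncovered f l : (l <= L)%N ->
  / c ^ l * INR #|V2| <= INR #|~: covered f l| ->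
  exists u, / c ^ l.+1 * INR #|V2| <= INR #|nbhd E u :\: covered f l| /\
            / c ^ l.+1 * INR #|V2| <= INR #|~: (covered f l :|: nbhd E u)|.
Proof.
move=> le_l_L hU.
have cl_gt0 : 0 < c ^ l by apply: pow_lt; lra.
have cl_le : c ^ l <= INR M by apply: Rle_trans cL_le_M; apply: Rle_pow => //; apply/leP.
have large : (#|V2| <= M * #|~: covered f l|)%N.
  apply/leP; apply: INR_le; rewrite mult_INR.
  have := pos_INR #|~: covered f l|.
  have : INR #|V2| <= c ^ l * INR #|~: covered f l|.
    by rewrite -(Rmult_1_l (INR #|V2|)) -(Rinv_r (c ^ l)); [nra | lra].
  nra.
have [|u [hu1 hu2]] := split_vertex (e := / c ^ l.+1 * INR #|V2|) large.
  by rewrite /= Rinv_mult -!Rmult_assoc Rinv_r ?Rmult_1_l //; apply: Rgt_not_eq; lra.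
by exists u; split; [rewrite setDE | rewrite setCU -setDE].
Qed.

Lemma greedy_sequence (x0 : V1) l : (l <= L)%N -> exists f : nat -> V1,
  forall i, (i < l)%N ->
    / c ^ i.+1 * INR #|V2| <= INR #|nbhd E (f i) :\: covered f i| /\
    / c ^ i.+1 * INR #|V2| <= INR #|~: covered f i.+1|.
Proof.
elim: l => [|l IH] hl; first by exists (fun=> x0).
have [f hf] := IH (ltnW hl).
have [|u hu] := @split_uncovered f l (ltnW hl).
  case: l {IH hl} hf => [|l] hf; last exact: (proj2 (hf l (ltnSn l))).
  by rewrite /covered big_ord0 setC0 cardsT /= Rinv_1; lra.
exists (fun j => if j == l then u else f j) => i; rewrite ltnS leq_eqVlt.
have agree b : (b <= l)%N -> covered (fun j => if j == l then u else f j) b = covered f b.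
  by move=> hb; apply: covered_ext => j hj; rewrite ifN // neq_ltn (leq_trans hj hb).
case/orP => [/eqP -> | hi]; first by rewrite coveredS eqxx !agree.
have -> : (i == l) = false := ltn_eqF hi.
by rewrite !agree ?(ltnW hi) //; apply: hf.
Qed.

End GreedySequence.

(* Index i : 'I_L stands for i+1 in [L]; eps_{i+1} = (64C)^{-(i+1)}. *)
Theorem lemma2p3 :
  forall (C : R), Rlt 1 C -> forall L : nat,
  exists n0 : nat,
  forall (V1 V2 : finType) (E : V1 -> V2 -> bool),
    bip_ramsey C E -> leq n0 #|V1| -> leq n0 #|V2| ->
    exists u : 'I_L -> V1,
      forall i : 'I_L,
        Rle (Rmult (Rinv (pow (Rmult 64 C) i.+1)) (INR #|V2|))
            (INR #|nbhd E (u i) :\: \bigcup_(j : 'I_L | ltn j i) nbhd E (u j)|) /\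
        Rle (Rmult (Rinv (pow (Rmult 64 C) i.+1)) (INR #|V2|))
            (INR #|~: \bigcup_(j : 'I_L | leq j i) nbhd E (u j)|).
Proof.
move=> C C_gt1 L.
have [m hm] := exists_nat_between C_gt1.
have [M hM] := INR_unbounded ((64 * C) ^ L).
exists (16 ^ (4 * m * M))%N => V1 V2 E ramsey hV1 hV2.
have [x0 _] : exists x0, x0 \in [set: V1].
  by apply/card_gt0P; rewrite cardsT (leq_trans (expn_gt0 16 _) hV1).
have C_gt0 : 0 < C by lra.
have split_vertex U e := @ramsey_splitting_vertex C m M V1 V2 E U e ramsey C_gt0 hm hV1 hV2.
have c_ge1 : 1 <= 64 * C by lra.
have cL_le_M : (64 * C) ^ L <= INR M by lra.
have [f hf] := greedy_sequence c_ge1 cL_le_M split_vertex x0 (leqnn L).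
exists (fun i => f i) => i.
by rewrite -(covered_ord _ _ (ltnW (ltn_ord i))) -(covered_ord _ _ (ltn_ord i)); apply: hf.
Qed.
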